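(* Let $M \neq \{0\}$ be a semiideal of $\mathbb{N}_0$ and let $d$ be the period of $M$. If $a, b \in M$, $a \neq 0$, and $a + d = b$, then $d$ divides $a$.
   Context: $\mathbb{N}_0$ is the semiring of natural numbers including $0$. A semiideal of $\mathbb{N}_0$ is a nonempty subset closed under addition and multiplication by elements of $\mathbb{N}_0$. For a semiideal $M\neq 0$, an element $e \in \mathbb{N}=\mathbb{N}_0\setminus\{0\}$ is a difference of $M$ if there are $x,y\in M$, $x\neq 0$, with $x+e=y$; the period of $M$ is the minimal difference. *)

From mathcomp Require Import all_boot.
Set Implicit Arguments. Unset Strict Implicit. Unset Printing Implicit Defensive.

Definition semiideal (M : nat -> Prop) : Prop :=
  (exists x, M x) /\
  (forall x y, M x -> M y -> M (x + y)) /\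
  (forall c x, M x -> M (c * x)).

Definition is_difference (M : nat -> Prop) (e : nat) : Prop :=
  0 < e /\ exists x y, M x /\ M y /\ x <> 0 /\ x + e = y.

Definition is_period (M : nat -> Prop) (d : nat) : Prop :=
  is_difference M d /\ forall e, is_difference M e -> d <= e.

(* Write a = q d + r with r < d.  From a and b = a + d the semiideal contains
   x = a + q b and y = (q + 2) a, and y - x = a - q d = r.  So r, if nonzero,
   would be a difference smaller than the period d. *)
From mathcomp Require Import all_boot.
From mathcomp Require Import zify.

Lemma mulSS_divn (a d : nat) : (a %/ d).+2 * a = a + a %/ d * (a + d) + a %% d.
Proof. by have := divn_eq a d; nia. Qed.

Lemma semiideal_modn_difference (M : nat -> Prop) (a d : nat) :
  semiideal M -> M a -> M (a + d) -> a <> 0 -> 0 < a %% d ->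
  is_difference M (a %% d).
Proof.
move=> [_ [M_add M_mul]] Ma Mad a_neq0 r_gt0; split=> //.
exists (a + a %/ d * (a + d)), ((a %/ d).+2 * a); split; last split.
- by apply: M_add => //; apply: M_mul.
- exact: M_mul.
- split; last by rewrite mulSS_divn.
  by move=> /eqP; rewrite addn_eq0 => /andP[/eqP].
Qed.

Theorem lemma4p3 (M : nat -> Prop) (d a b : nat) :
  semiideal M ->
  ~ (forall x, M x <-> x = 0) ->
  is_period M d ->
  M a -> M b -> a <> 0 -> a + d = b ->
  d %| a.
Proof.
move=> sM _ [[d_gt0 _] d_min] Ma Mb a_neq0 ab.
rewrite /dvdn; apply/eqP; case: (posnP (a %% d)) => // r_gt0.
have r_diff : is_difference M (a %% d).
  by apply: semiideal_modn_difference; rewrite ?ab.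
by have := d_min _ r_diff; rewrite leqNgt ltn_mod d_gt0.
Qed.
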